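(* Work in ZFC together with the Continuum Hypothesis. Let $(\Omega,\mathcal{F})$ be a measurable space with a right-continuous filtration $\mathbb{F}=(\mathcal{F}_t)_{t\in[0,1]}$, $\mathcal{P}$ a family of probability measures on $(\Omega,\mathcal{F})$, and $\mathbb{F}^*=(\mathcal{F}^*_t)_{t\in[0,1]}$ with $\mathcal{F}^*_t:=\bigcap_{P\in\mathcal{P}}\mathcal{F}_t\vee\mathcal{N}^P$, where $\mathcal{N}^P$ is the collection of $(\mathcal{F},P)$-null sets. Let $(Y^n)_{n\ge1}$ be a sequence of $\mathbb{F}^*$-adapted càdlàg processes. Assume that for each $P\in\mathcal{P}$ there exists a càdlàg process $Y^P$ such that $Y^n_t\to Y^P_t$ in $P$-probability for all $t\in[0,1]$. Then there exists an $\mathbb{F}^*$-adapted càdlàg process $Y$ such that $Y=Y^P$ $P$-a.s. for all $P\in\mathcal{P}$. *)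

From HB Require Import structures.
From mathcomp Require Import all_boot all_order all_algebra.
From mathcomp Require Import all_classical all_reals all_analysis.
Set Implicit Arguments. Unset Strict Implicit. Unset Printing Implicit Defensive.
Import Order.TTheory GRing.Theory Num.Theory.
Import numFieldNormedType.Exports.
Local Open Scope classical_set_scope.
Local Open Scope ring_scope.

Definition CH (R : realType) : Prop :=
  forall A : set R, countable A \/ (A #= [set: R])%card.

Section defs.
Context {d : measure_display} {T : measurableType d} {R : realType}.

Definition is_filtration (F : R -> set (set T)) : Prop :=
  (forall t, 0 <= t <= 1 -> sigma_algebra setT (F t) /\ F t `<=` measurable) /\
  (forall s t, 0 <= s -> s <= t -> t <= 1 -> F s `<=` F t).

Definition right_continuous_filtration (F : R -> set (set T)) : Prop :=
  forall t, 0 <= t < 1 -> F t = \bigcap_(s in [set s | t < s <= 1]) F s.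

Definition Fstar (Pfam : set (probability T R)) (F : R -> set (set T))
  : R -> set (set T) :=
  fun t => \bigcap_(P in Pfam) <<s F t `|` [set N | P.-negligible N] >>.

Definition adapted (G : R -> set (set T)) (Y : R -> T -> R) : Prop :=
  forall t, 0 <= t <= 1 -> forall B : set R, measurable B -> G t (Y t @^-1` B).

Definition cadlag (Y : R -> T -> R) : Prop :=
  forall w : T,
    (forall t, 0 <= t < 1 -> (fun s => Y s w) @ t^'+ --> Y t w) /\
    (forall t, 0 < t <= 1 -> cvg ((fun s => Y s w) @ t^'-)).

(* convergence in P-probability (via outer P-probability, so that the
   events need not be F-measurable) *)
Definition cvg_in_prob (P : probability T R) (Xn : nat -> T -> R) (X : T -> R)
  : Prop :=
  forall eps : R, 0 < eps -> forall delta : R, 0 < delta ->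
    \forall n \near \oo, exists A : set T,
      [/\ measurable A, [set w | eps < `|Xn n w - X w|] `<=` A &
          (P A <= delta%:E)%E].
End defs.

(* Under CH the "requirements" g : nat -> nat -> bool can be well-ordered in type
   omega_1. Since initial segments are countable, transfinite recursion builds a
   tower of infinite sets A_g of indices, each almost contained in all earlier
   ones, such that A_g is the range of an increasing a with g (a k) k whenever each
   column of g holds eventually. The limit of Y^n_t(w) along a final segment of the
   tower does not depend on P. Given P and t, let g n k say that Y^n_t is
   2^-(k+1)-close to Y^P_t in P-probability; Borel-Cantelli along A_g shows that
   the tower limit equals Y^P_t P-a.s., hence is measurable for the P-completion
   of F_t. At dyadic times these limits lie P-a.s. on the càdlàg path of Y^P; Y is
   the càdlàg path through them when one exists, and right-continuity, which
   passes to the completed filtrations, makes Y adapted. *)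

From HB Require Import structures.
From mathcomp Require Import all_boot all_order all_algebra.
From mathcomp Require Import all_classical all_reals all_analysis.
From mathcomp Require Import ring lra.
From mathcomp Require Import unstable.
From mathcomp Require wochoice.
From Stdlib Require Import Wellfounded.Inverse_Image.
Set Implicit Arguments. Unset Strict Implicit. Unset Printing Implicit Defensive.
Import Order.TTheory GRing.Theory Num.Theory.
Import numFieldNormedType.Exports.
Local Open Scope classical_set_scope.
Local Open Scope ring_scope.

Definition unbounded (A : set nat) := forall N, exists n, (N <= n)%N /\ A n.

Definition almost_subset (A B : set nat) :=
  exists N, forall n, (N <= n)%N -> A n -> B n.

Lemma almost_subset_trans A B C :
  almost_subset A B -> almost_subset B C -> almost_subset A C.
Proof.
move=> [N1 h1] [N2 h2]; exists (maxn N1 N2) => n; rewrite geq_max => /andP[n1 n2].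
by move=> /(h1 _ n1)/(h2 _ n2).
Qed.

Lemma subset_almost_subset A B : A `<=` B -> almost_subset A B.
Proof. by move=> AB; exists 0%N => n _ /AB. Qed.

Lemma almost_subsetI A B C :
  almost_subset A B -> almost_subset A C -> almost_subset A (B `&` C).
Proof.
move=> [N1 h1] [N2 h2]; exists (maxn N1 N2) => n; rewrite geq_max => /andP[n1 n2].
by move=> An; split; [exact: h1|exact: h2].
Qed.

Lemma unbounded_range (a : nat -> nat) :
  {mono a : m n / (m <= n)%N} -> unbounded (range a).
Proof. by move=> a_mono N; exists (a N); split; [exact: mono_leq_infl|exists N]. Qed.

Lemma pseudo_intersection_seq (C : nat -> set nat) :
  (forall k, unbounded [set n | forall j, (j <= k)%N -> C j n]) ->
  exists B, unbounded B /\ forall j, almost_subset B (C j).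
Proof.
move=> C_unbounded.
have /choice[pick pickP] : forall k, exists pk : nat -> nat, forall m,
    (m <= pk m)%N /\ forall j, (j <= k)%N -> C j (pk m).
  by move=> k; have [pk pkP] := choice (C_unbounded k); exists pk.
pose b := fix b k := if k is k'.+1 then pick k (b k').+1 else pick 0%N 0%N.
have b_mono : {mono b : m n / (m <= n)%N}.
  by apply/leq_mono/(homo_ltn ltn_trans) => k; exact: (pickP k.+1 _).1.
have bC k j : (j <= k)%N -> C j (b k).
  by case: k => [|k]; [exact: (pickP 0%N 0%N).2|exact: (pickP k.+1 _).2].
exists (range b); split; first exact: unbounded_range.
by move=> j; exists (b j) => n + [k _ kn]; rewrite -kn b_mono; exact: bC.
Qed.

Section almost_decreasing_chain.
Variables (I : Type) (lt : I -> I -> Prop) (A : I -> set nat).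
Hypothesis lt_total : forall x y, lt x y \/ x = y \/ lt y x.

Let prefix (y : nat -> I) k := [set n | forall j, (j <= k)%N -> A (y j) n].

Lemma chain_prefix_almost_min (y : nat -> I) :
  (forall i j, lt (y i) (y j) -> almost_subset (A (y j)) (A (y i))) ->
  forall k, exists i, almost_subset (A (y i)) (prefix y k).
Proof.
move=> A_decr; elim=> [|k [i IH]].
  by exists 0%N; apply: subset_almost_subset => n An j; rewrite leqn0 => /eqP->.
have prefixS : prefix y k `&` A (y k.+1) `<=` prefix y k.+1.
  by move=> n [An Akn] j; rewrite leq_eqVlt => /orP[/eqP->//|]; exact: An.
have [lt_ik|[eq_ik|lt_ki]] := lt_total (y i) (y k.+1).
- exists k.+1; apply: (almost_subset_trans _ (subset_almost_subset prefixS)).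
  apply: almost_subsetI (almost_subset_trans (A_decr _ _ lt_ik) IH) _.
  exact: subset_almost_subset.
- exists i; apply: (almost_subset_trans _ (subset_almost_subset prefixS)).
  by apply: almost_subsetI IH _; rewrite eq_ik; exact: subset_almost_subset.
- exists i; apply: (almost_subset_trans _ (subset_almost_subset prefixS)).
  exact: almost_subsetI IH (A_decr _ _ lt_ki).
Qed.

Lemma pseudo_intersection_countable_chain (S : set I) :
  countable S -> (forall x, S x -> unbounded (A x)) ->
  (forall x y, S x -> S y -> lt x y -> almost_subset (A y) (A x)) ->
  exists B, unbounded B /\ forall x, S x -> almost_subset B (A x).
Proof.
move=> /pfcard_geP[->|/surjfunPex[y ->]] A_unbounded A_decr.
  by exists setT; split=> // N; exists N.
have [B [B_unbounded By]] : exists B, unbounded B /\ forall j, almost_subset B (A (y j)).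
  apply: pseudo_intersection_seq => k M.
  have [i [N iN]] :=
    chain_prefix_almost_min (fun i j => A_decr _ _ (imageT y i) (imageT y j)) k.
  have [n [Mn Ayn]] := A_unbounded _ (imageT y i) (maxn M N).
  by move: Mn; rewrite geq_max => /andP[Mn Nn]; exists n; split => //; exact: iN.
by exists B; split=> // _ [j _ <-].
Qed.

End almost_decreasing_chain.

Definition countable_segments_wo (I : Type) (lt : I -> I -> Prop) :=
  [/\ well_founded lt, forall x y, lt x y \/ x = y \/ lt y x &
      forall x, countable [set y | lt y x]].

Section tower.
Variables (I : Type) (lt : I -> I -> Prop) (H : I -> set nat -> Prop).
Hypothesis lt_wo : countable_segments_wo lt.
Hypothesis H_dense :
  forall x B, unbounded B -> exists A, [/\ A `<=` B, unbounded A & H x A].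

Let lt_wf : well_founded lt. Proof. by case: lt_wo. Qed.

Let tower_step x (tower_below : forall y, lt y x -> set nat) : set nat :=
  if pselect (exists A, [/\ unbounded A, H x A &
                  forall y (yx : lt y x), almost_subset A (tower_below y yx)])
  is left ex then projT1 (cid ex) else setT.

Definition tower : I -> set nat := Fix lt_wf (fun=> set nat) tower_step.

Lemma tower_spec x : [/\ unbounded (tower x), H x (tower x) &
  forall y, lt y x -> almost_subset (tower x) (tower y)].
Proof.
have towerE z : tower z = @tower_step z (fun y _ => tower y).
  rewrite /tower Fix_eq // => {}z f g fg; congr (tower_step _).
  by apply: functional_extensionality_dep => y; apply/funext => ?; exact: fg.
elim/(well_founded_ind lt_wf): x => x IH.
have [_ lt_total lt_cnt] := lt_wo.
have below_unbounded y : lt y x -> unbounded (tower y) by case/IH.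
have below_decr y z : lt z x -> lt y z -> almost_subset (tower z) (tower y).
  by move=> /IH[_ _]; apply.
have [B [B_unbounded B_below]] := pseudo_intersection_countable_chain lt_total
  (lt_cnt x) below_unbounded (fun y z _ => below_decr y z).
have [A [AB A_unbounded HA]] := H_dense x B_unbounded.
rewrite towerE /tower_step; case: pselect => [ex|[]]; first by case: cid => ? [].
exists A; split=> // y yx.
exact: almost_subset_trans (subset_almost_subset AB) (B_below y yx).
Qed.

End tower.

Lemma countable_segments_wo_pullback (I J : Type) (lt : J -> J -> Prop) (e : I -> J) :
  injective e -> well_founded lt -> (forall x y, lt x y \/ x = y \/ lt y x) ->
  (forall x, countable [set y | lt y (e x)]) ->
  countable_segments_wo (fun x y => lt (e x) (e y)).
Proof.
move=> e_inj lt_wf lt_total lt_cnt; split.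
- exact: wf_inverse_image lt_wf.
- by move=> x y; case: (lt_total (e x) (e y)) => [|[/e_inj|]]; auto.
- move=> x; have /countable_injP[f f_inj] := lt_cnt x.
  apply/countable_injP; exists (f \o e) => y z; rewrite !in_setE => yx zx fyz.
  by apply: e_inj; apply: f_inj; rewrite ?in_setE.
Qed.

Section well_order.
Variables (U : eqType) (r : rel U).
Hypothesis r_wo : wochoice.well_order r.

Lemma wo_min (A : set U) : A !=set0 -> exists2 z, A z & forall x, A x -> r z x.
Proof.
move=> [x Ax]; have [|z [[Az z_lb] _]] := @r_wo [pred x | `[< A x >]].
  by exists x; rewrite inE.
rewrite inE in Az; exists z => // y Ay; apply: z_lb; by rewrite inE.
Qed.

Let r_chain : wochoice.wo_chain r predT. Proof. by move=> A _; exact: r_wo. Qed.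

Lemma wo_total x y : r x y || r y x.
Proof. exact: wochoice.wo_chainW r_chain x y isT isT. Qed.

Lemma wo_antisym x y : r x y -> r y x -> x = y.
Proof.
by move=> xy yx; apply: (wochoice.wo_chain_antisymmetric r_chain) => //; exact/andP.
Qed.

Definition wo_lt x y := r x y /\ x <> y.

Lemma wo_lt_wf : well_founded wo_lt.
Proof.
move=> x; apply: contrapT => x_nacc.
have [m m_nacc m_min] := @wo_min [set y | ~ Acc wo_lt y] (ex_intro _ x x_nacc).
apply: m_nacc; constructor => y [ym neq_ym]; apply: contrapT => y_nacc.
by apply: neq_ym; apply: wo_antisym ym (m_min y y_nacc).
Qed.

Lemma wo_lt_total x y : wo_lt x y \/ x = y \/ wo_lt y x.
Proof.
have [->|neq_xy] := pselect (x = y); first by right; left.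
by case/orP: (wo_total x y) => ?; [left|right; right]; split=> // /esym.
Qed.

End well_order.

(* Take any well-order of the reals; if some initial segment is uncountable,
   CH gives a bijection with the least such segment, along which we pull back. *)
Lemma CH_countable_segments_wo (R : realType) : CH R ->
  exists lt : R -> R -> Prop, countable_segments_wo lt.
Proof.
move=> hCH; have [r r_wo] := wochoice.well_ordering_principle R.
have [[x0 x0_unc]|all_cnt] := pselect (exists x, ~ countable [set y | wo_lt r y x]);
    last first.
  exists (wo_lt r); split; [exact: wo_lt_wf|exact: wo_lt_total|].
  by move=> x; apply: contrapT => x_unc; apply: all_cnt; exists x.
have [m m_unc m_min] :=
  @wo_min _ _ r_wo [set x | ~ countable [set y | wo_lt r y x]] (ex_intro _ x0 x0_unc).
have [//|] := hCH [set y | wo_lt r y m].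
rewrite card_eq_sym => /card_set_bijP[phi [phi_below phi_inj _]].
exists (fun x y => wo_lt r (phi x) (phi y)).
apply: countable_segments_wo_pullback.
- by move=> x y /phi_inj; apply; exact: in_setT.
- exact: wo_lt_wf.
- exact: wo_lt_total.
- move=> x; apply: contrapT => x_unc; have [below neq] := phi_below x I.
  exact/neq/(wo_antisym r_wo below)/m_min.
Qed.

Section ternary.
Variable R : realType.

Let w k : R := (3 ^+ k.+1)^-1.
Let digits_sum (b : nat -> bool) n : R := \sum_(0 <= k < n) (b k)%:R * w k.

Let w_gt0 k : 0 < w k. Proof. by rewrite invr_gt0 exprn_gt0. Qed.

Let wS k : w k.+1 = w k / 3. Proof. by rewrite /w exprS invfM mulrC. Qed.

Let w_sum m n : (m <= n)%N -> 2 * \sum_(m <= k < n) w k = 3 * (w m - w n).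
Proof.
elim: n => [|n IH]; first by rewrite leqn0 => /eqP->; rewrite big_geq // subrr !mulr0.
rewrite leq_eqVlt => /orP[/eqP->|mn]; first by rewrite big_geq // subrr !mulr0.
by rewrite big_nat_recr //= mulrDr IH // wS; field.
Qed.

Let digit_le_w (b : nat -> bool) k : (b k)%:R * w k <= w k.
Proof. by rewrite ler_piMl ?(ltW (w_gt0 k)) //; case: (b k); rewrite ?ler01. Qed.

Let digits_sum_le b m n : (m <= n)%N -> digits_sum b m <= digits_sum b n.
Proof.
move=> mn; rewrite /digits_sum (big_cat_nat (leq0n m) mn) /= lerDl.
by apply: sumr_ge0 => k _; rewrite mulr_ge0 // ltW.
Qed.

Let digits_sum_le_half b n : digits_sum b n <= 1 / 2.
Proof.
apply: le_trans (ler_sum _ (fun k _ => digit_le_w b k)) _.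
by rewrite ler_pdivlMr // mulrC w_sum // /w expr1 mulrBr mulfV // lerBlDr lerDl.
Qed.

(* The tail after position m weighs at most w m / 2, so the first differing
   digit decides the order. *)
Let digits_sum_le_of_0 b m n : ~~ b m -> digits_sum b n <= digits_sum b m + w m / 2.
Proof.
move=> bm; have [nm|mn] := leqP n m.
  by apply: le_trans (digits_sum_le b nm) _; rewrite lerDl divr_ge0 // ltW.
rewrite /digits_sum (big_cat_nat (leq0n m) (ltnW mn)) /= lerD2l.
rewrite big_ltn //= (negbTE bm) mul0r add0r.
apply: le_trans (ler_sum _ (fun k _ => digit_le_w b k)) _.
rewrite ler_pdivlMr // mulrC w_sum // wS mulrBr mulrCA mulfV // mulr1.
by rewrite lerBlDr lerDl mulr_ge0 // ltW.
Qed.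

Definition ternary (b : nat -> bool) : R := sup (range (digits_sum b)).

Let digits_sum_le_ternary b n : digits_sum b n <= ternary b.
Proof.
apply: ub_le_sup; last by exists n.
by exists (1 / 2) => _ [k _ <-]; exact: digits_sum_le_half.
Qed.

Let ternary_le b y : (forall n, digits_sum b n <= y) -> ternary b <= y.
Proof.
by move=> h; apply: ge_sup; [exists (digits_sum b 0%N), 0%N|move=> _ [n _ <-]].
Qed.

Let ternary_lt (b b' : nat -> bool) m : (forall k, (k < m)%N -> b k = b' k) ->
  b m -> ~~ b' m -> ternary b' < ternary b.
Proof.
move=> eq_bb' bm b'm.
have eq_m : digits_sum b m = digits_sum b' m.
  by apply: eq_big_nat => k /andP[_ km]; rewrite eq_bb'.
apply: le_lt_trans (ternary_le (fun n => digits_sum_le_of_0 n b'm)) _.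
apply: lt_le_trans (digits_sum_le_ternary b m.+1).
rewrite /digits_sum big_nat_recr //= -/(digits_sum b m) eq_m bm mul1r ltrD2l.
by rewrite ltr_pdivrMr // ltr_pMr // ltr1n.
Qed.

Lemma ternary_inj : injective ternary.
Proof.
move=> b b' eq_bb'; apply/funext => k; apply: contrapT => neq_k.
have [m neq_m min_m] := ex_minnP (ex_intro (fun m => b m != b' m) k (introN eqP neq_k)).
have eq_lt j : (j < m)%N -> b j = b' j.
  by move=> jm; apply/eqP; apply: contraTT jm; rewrite -leqNgt; exact: min_m.
move: neq_m; case bm: (b m); case b'm: (b' m) => // _.
  by have := ternary_lt eq_lt; rewrite bm b'm eq_bb' ltxx => /(_ isT isT).
have := @ternary_lt b' b m (fun j jm => esym (eq_lt j jm)).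
by rewrite bm b'm eq_bb' ltxx => /(_ isT isT).
Qed.

End ternary.

Definition uncurry_bits (g : nat -> nat -> bool) (m : nat) : bool :=
  if unpickle m is Some p then g p.1 p.2 else false.

Lemma uncurry_bits_inj : injective uncurry_bits.
Proof.
move=> g g' eq_gg'; apply/funext => n; apply/funext => k.
by have := congr1 (fun h => h (pickle (n, k))) eq_gg'; rewrite /uncurry_bits pickleK.
Qed.

Definition eventually_in_columns (g : nat -> nat -> bool) :=
  forall k, exists N, forall n, (N <= n)%N -> g n k.

Definition diagonalizes (g : nat -> nat -> bool) (A : set nat) :=
  eventually_in_columns g -> exists a : nat -> nat,
    [/\ {mono a : m n / (m <= n)%N}, A = range a & forall k, g (a k) k].

Lemma diagonalizes_dense g B :
  unbounded B -> exists A, [/\ A `<=` B, unbounded A & diagonalizes g A].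
Proof.
move=> B_unbounded; have [g_cols|g_ncols] := pselect (eventually_in_columns g);
  last by exists B; split=> // /g_ncols.
have [N NP] := choice g_cols; have [pick pickP] := choice B_unbounded.
pose a := fix a k := if k is k'.+1 then pick (maxn (N k) (a k').+1) else pick (N 0%N).
have a_ge k : (maxn (N k) (if k is k'.+1 then (a k').+1 else 0) <= a k)%N.
  by case: k => [|k]; [rewrite maxn0; exact: (pickP _).1|exact: (pickP _).1].
have a_mono : {mono a : m n / (m <= n)%N}.
  apply/leq_mono/(homo_ltn ltn_trans) => k.
  by have := a_ge k.+1; rewrite geq_max => /andP[].
exists (range a); split; first by move=> _ [[|k] _ <-]; exact: (pickP _).2.
  exact: unbounded_range.
move=> _; exists a; split=> // k; apply: NP.
by have := a_ge k; rewrite geq_max => /andP[].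
Qed.

Lemma CH_diagonalizing_tower (R : realType) : CH R ->
  exists (lt : (nat -> nat -> bool) -> (nat -> nat -> bool) -> Prop)
         (A : (nat -> nat -> bool) -> set nat),
    (forall g h, lt g h \/ g = h \/ lt h g) /\
    forall g, [/\ unbounded (A g), diagonalizes g (A g) &
                  forall h, lt h g -> almost_subset (A g) (A h)].
Proof.
move=> hCH; have [ltR [ltR_wf ltR_total ltR_cnt]] := CH_countable_segments_wo hCH.
pose e g := ternary R (uncurry_bits g).
have e_inj : injective e by move=> g g' /ternary_inj/uncurry_bits_inj.
have lt_wo := countable_segments_wo_pullback e_inj ltR_wf ltR_total (fun g => ltR_cnt _).
exists (fun g h => ltR (e g) (e h)), (tower diagonalizes lt_wo).
split; first by case: lt_wo.
exact: tower_spec diagonalizes_dense.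
Qed.

Section dyadic.
Context {R : realType}.

Lemma inv_pow2_lt (e : R) : 0 < e -> \forall j \near \oo, ((2 ^ j)%:R)^-1 < e.
Proof.
move=> e_gt0; have einv_ge0 : 0 <= e^-1 by rewrite invr_ge0 ltW.
exists (Num.Def.archi_bound e^-1) => // j /= Jj.
rewrite -[e]invrK ltf_pV2 ?posrE ?invr_gt0 ?ltr0n ?expn_gt0 //.
apply: lt_le_trans (archi_boundP einv_ge0) _.
by rewrite ler_nat (leq_trans Jj) // ltnW // ltn_expl.
Qed.

(* Clamping the numerator keeps every dyadic in [0, 1]. *)
Definition dyadic (i : nat * nat) : R := (minn i.2 (2 ^ i.1))%:R / (2 ^ i.1)%:R.

Lemma dyadic_ge0 i : 0 <= dyadic i.
Proof. by rewrite divr_ge0. Qed.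

Lemma dyadic_le1 i : dyadic i <= 1.
Proof. by rewrite ler_pdivrMr ?ltr0n ?expn_gt0 // mul1r ler_nat geq_minr. Qed.

Lemma dyadic_itv i : 0 <= dyadic i <= 1.
Proof. by rewrite dyadic_ge0 dyadic_le1. Qed.

Lemma dyadic1 : dyadic (0%N, 1%N) = 1.
Proof. by rewrite /dyadic /= expn0 divr1. Qed.

Lemma dyadic_right_near (t : R) j : 0 <= t < 1 ->
  exists i, t < dyadic i <= t + ((2 ^ j)%:R)^-1.
Proof.
move=> /andP[t_ge0 t_lt1]; set N := (2 ^ j)%N; have N_gt0 : (0 < N)%N by rewrite expn_gt0.
have tN_lt_N : t * N%:R < N%:R by rewrite -[X in _ < X]mul1r ltr_pM2r ?ltr0n.
have [m tN_lt_m m_min] := ex_minnP (ex_intro (fun m => t * N%:R < m%:R) N tN_lt_N).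
have mN : (m <= N)%N := m_min N tN_lt_N.
exists (j, m); rewrite /dyadic /= -/N (minn_idPl mN) ltr_pdivlMr ?ltr0n // tN_lt_m /=.
rewrite ler_pdivrMr ?ltr0n // mulrDl mulVf ?pnatr_eq0 -?lt0n //.
case: m tN_lt_m m_min {mN} => [|m] tN_lt_m m_min.
  by move: tN_lt_m; rewrite ltNge mulr_ge0.
by rewrite -natr1 lerD2r leNgt; apply/negP => /m_min; rewrite ltnn.
Qed.

Lemma dyadic_right_seq (t : R) : 0 <= t < 1 -> exists ij : nat -> nat * nat,
  [/\ forall j, t < dyadic (ij j),
      forall s, t < s -> \forall j \near \oo, dyadic (ij j) <= s &
      dyadic (ij j) @[j --> \oo] --> t].
Proof.
move=> t_itv; have [ij ijP] := choice (fun j => dyadic_right_near j t_itv).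
have ij_gt j : t < dyadic (ij j) by have /andP[] := ijP j.
have ij_near s : t < s -> \forall j \near \oo, dyadic (ij j) <= s.
  rewrite -subr_gt0 => /inv_pow2_lt; apply: filterS => j jst.
  have /andP[_] := ijP j; lra.
exists ij; split=> //; apply/cvgrPdist_lt => e e_gt0.
near=> j; rewrite ltr0_norm ?subr_lt0 // opprB.
have /andP[_] := ijP j; have : ((2 ^ j)%:R)^-1 < e by near: j; exact: inv_pow2_lt.
lra.
Unshelve. all: by end_near.
Qed.

End dyadic.

Section completion.
Context {d : measure_display} {T : measurableType d} {R : realType}.
Variable P : probability T R.

Definition completion (G : set (set T)) := <<s G `|` [set N | P.-negligible N] >>.

Let completion_type G := g_sigma_algebraType (G `|` [set N | P.-negligible N]).

Lemma negligible_completion G N : P.-negligible N -> completion G N.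
Proof. by move=> N_null; apply: sub_gen_smallest; right. Qed.

Lemma sub_completion G : G `<=` completion G.
Proof. by move=> A GA; apply: sub_gen_smallest; left. Qed.

Lemma completionS G G' : G `<=` G' -> completion G `<=` completion G'.
Proof.
move=> GG'; apply: smallest_sub; first exact: smallest_sigma_algebra.
by move=> A [/GG'/sub_completion|/negligible_completion].
Qed.

Lemma completionY G A N : completion G A -> P.-negligible N -> completion G (A `+` N).
Proof.
move=> GA N_null; rewrite setY_def.
apply: (@measurableU _ (completion_type G));
  apply: (@measurableD _ (completion_type G)) => //.
all: exact: negligible_completion.
Qed.

Lemma completionE G E : sigma_algebra setT G ->
  completion G E <-> exists2 A, G A & P.-negligible (E `+` A).
Proof.
move=> [G0 GC GU]; split; last first.
  move=> [A GA EA_null]; rewrite -[E]set0Y -(setYK A) -setYA [A `+` E]setYC.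
  exact: completionY (sub_completion GA) EA_null.
move=> GE; pose X := [set E | exists2 A, G A & P.-negligible (E `+` A)].
apply: (smallest_sub (X := X) _ _ GE).
  split.
  - by exists set0; rewrite // setYK; exact: negligible_set0.
  - move=> A [B GB AB_null]; exists (setT `\` B); first exact: GC.
    apply: negligibleS AB_null => x [[[_ nAx] h]|[[_ nBx] h]]; [right|left].
      by split=> //; apply: contrapT => nBx; apply: h.
    by split=> //; apply: contrapT => nAx; apply: h.
  - move=> A AP; have /choice[B BP] : forall n, exists B, G B /\ P.-negligible (A n `+` B).
      by move=> n; have [B] := AP n; exists B.
    exists (\bigcup_n B n); first by apply: GU => n; case: (BP n).
    apply: (@negligibleS _ _ _ _ (\bigcup_n (A n `+` B n))).
      move=> x [[[n _ Anx] Bx]|[[n _ Bnx] Ax]]; exists n => //.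
        by left; split => // Bnx; apply: Bx; exists n.
      by right; split => // Anx; apply: Ax; exists n.
    by apply: negligible_bigcup => n; case: (BP n).
move=> A [GA|A_null].
- by exists A; rewrite // setYK; exact: negligible_set0.
- by exists set0; rewrite // setY0.
Qed.

Lemma completion_cvg G (h : nat -> T -> R) (f : T -> R) (N : set T) :
  P.-negligible N ->
  (forall m B, measurable B -> completion G (h m @^-1` B)) ->
  (forall w, ~ N w -> h m w @[m --> \oo] --> f w) ->
  forall B, measurable B -> completion G (f @^-1` B).
Proof.
move=> N_null h_meas h_cvg B mB; pose T' := completion_type G.
have mCN : measurable (~` N : set T').
  by apply: measurableC; exact: negligible_completion.
have mf : measurable_fun (~` N : set T') (f : T' -> R).
  apply: (measurable_realfun.measurable_fun_cvg (h := fun m : nat => h m : T' -> R)) => //.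
  by move=> m _ Y mY; apply: measurableI => //; exact: h_meas.
have -> : f @^-1` B = (~` N `&` f @^-1` B) `|` (N `&` f @^-1` B).
  by rewrite -setIUl setUC setUv setTI.
apply: (@measurableU _ T'); first exact: mf.
by apply: negligible_completion; apply: negligibleS N_null; exact: subIsetl.
Qed.

End completion.

Lemma lim_sup_set_addn T (A : (set T)^nat) J :
  lim_sup_set A = lim_sup_set (fun j => A (j + J)%N).
Proof.
apply/seteqP; split=> x Ax n _.
  have [j /= nJj Ajx] := Ax (n + J)%N I.
  by exists (j - J)%N; rewrite /= ?subnK ?leq_subRL ?(leq_trans (leq_addl _ _) nJj) // addnC.
have [j /= nj Ajx] := Ax n I.
by exists (j + J)%N => //=; rewrite (leq_trans nj) // leq_addr.
Qed.

Lemma not_lim_sup_set T (A : (set T)^nat) x :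
  ~ lim_sup_set A x -> exists K, forall k, (K <= k)%N -> ~ A k x.
Proof.
move=> Ax; apply: contrapT => Ax_often; apply: Ax => n _.
apply: contrapT => Ax_n; apply: Ax_often; exists n => k nk Akx.
by apply: Ax_n; exists k.
Qed.

Lemma lim_sup_setY T (E : set T) (A : (set T)^nat) :
  E `+` lim_sup_set A `<=` \bigcup_j (E `+` A j).
Proof.
move=> x [[Ex nAx]|[Ax nEx]].
  by have [K AKx] := not_lim_sup_set nAx; exists K => //; left; split=> //; exact: AKx.
by have [j _ Ajx] := Ax 0%N I; exists j => //; right.
Qed.

Section completed_filtration.
Context {d : measure_display} {T : measurableType d} {R : realType}.
Variables (P : probability T R) (F : R -> set (set T)).
Hypotheses (hF : is_filtration F) (hFrc : right_continuous_filtration F).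

Lemma completion_filtrationS s t :
  0 <= s -> s <= t -> t <= 1 -> completion P (F s) `<=` completion P (F t).
Proof. by move=> s_ge0 st t_le1; apply: completionS; exact: hF.2. Qed.

(* E is approximated in F(s_j) along dyadics s_j decreasing to t; the limsup of
   the approximations lies in every F(s), s > t, hence in F(t). *)
Lemma completion_right_continuous t E : 0 <= t < 1 ->
  (forall s, t < s <= 1 -> completion P (F s) E) -> completion P (F t) E.
Proof.
move=> t_itv E_right; have /andP[t_ge0 t_lt1] := t_itv.
have F_sigma s : 0 <= s <= 1 -> sigma_algebra setT (F s) by move=> /(hF.1 s)[].
have [ij [ij_gt ij_near _]] := dyadic_right_seq t_itv.
have /choice[A AP] : forall j, exists A, F (dyadic (ij j)) A /\ P.-negligible (E `+` A).
  move=> j; have F_sigma_j := F_sigma _ (dyadic_itv (ij j)).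
  have [|A FA EA_null] := (completionE _ _ F_sigma_j).1 (E_right _ _).
    by rewrite ij_gt dyadic_le1.
  by exists A.
apply/(completionE _ _ (F_sigma t _)); first by rewrite t_ge0 ltW.
exists (lim_sup_set A); last first.
  apply: negligibleS (@lim_sup_setY _ E A) _.
  by apply: negligible_bigcup => j; case: (AP j).
rewrite hFrc // => s /andP[ts s_le1]; have [J _ ij_le_s] := ij_near s ts.
have s_itv : 0 <= s <= 1 by rewrite s_le1 (le_trans t_ge0) // ltW.
rewrite (lim_sup_set_addn _ J) -(sigma_algebra_id (F_sigma s s_itv)).
apply: (@bigcapT_measurable _ (g_sigma_algebraType (F s))) => n.
apply: (@bigcup_measurable _ (g_sigma_algebraType (F s))) => j _.
apply: sub_gen_smallest; apply: (hF.2 (dyadic (ij (j + J)%N))) (AP _).1 => //.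
  exact: dyadic_ge0.
by apply: ij_le_s; rewrite /= leq_addl.
Qed.

End completed_filtration.

Definition cadlag_path {R : realType} (c : R -> R) :=
  (forall t, 0 <= t < 1 -> c @ t^'+ --> c t) /\
  (forall t, 0 < t <= 1 -> cvg (c @ t^'-)).

Lemma right_continuous_eq_dyadic {R : realType} (c1 c2 : R -> R) :
  (forall t, 0 <= t < 1 -> c1 @ t^'+ --> c1 t) ->
  (forall t, 0 <= t < 1 -> c2 @ t^'+ --> c2 t) ->
  (forall i, c1 (dyadic i) = c2 (dyadic i)) ->
  forall t, 0 <= t <= 1 -> c1 t = c2 t.
Proof.
move=> c1_rc c2_rc eq_c t /andP[t_ge0]; rewrite le_eqVlt => /orP[/eqP->|t_lt1].
  by rewrite -dyadic1 eq_c.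
have t_itv : 0 <= t < 1 by rewrite t_ge0 t_lt1.
have [ij [ij_gt _ ij_cvg]] := dyadic_right_seq t_itv.
have c1_lim := (cvg_at_rightP c1 t (c1 t)).1 (c1_rc t t_itv) _ (conj ij_gt ij_cvg).
have c2_lim := (cvg_at_rightP c2 t (c2 t)).1 (c2_rc t t_itv) _ (conj ij_gt ij_cvg).
rewrite (funext (fun j => eq_c (ij j))) in c1_lim.
exact: cvg_unique c1_lim c2_lim.
Qed.

Section fast_convergence_in_probability.
Context {d : measure_display} {T : measurableType d} {R : realType}.
Variable P : probability T R.

Definition close_in_prob (X Y : T -> R) (e : R) :=
  exists M, [/\ measurable M, [set w | e < `|X w - Y w|] `<=` M & (P M <= e%:E)%E].

Lemma close_in_prob_ae_cvg (X : nat -> T -> R) (Y : T -> R) :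
  (forall k, close_in_prob (X k) Y ((2 ^ k.+1)%:R)^-1) ->
  exists2 N, P.-negligible N & forall w, ~ N w -> X k w @[k --> \oo] --> Y w.
Proof.
move=> /choice[M MP]; have mM k : measurable (M k) by case: (MP k).
have mlimM : measurable (lim_sup_set M).
  by apply: bigcapT_measurable => n; apply: bigcup_measurable => k _.
exists (lim_sup_set M).
  exists (lim_sup_set M); split=> //; apply: lim_sup_set_cvg0 => //.
  apply: le_lt_trans (ltey _ : (1%:E < +oo)%E).
  apply: le_trans (epsilon_trick0 xpredT (@ler01 R)).
  apply: lee_nneseries => [n _ _|n _]; first exact: measure_ge0.
  by case: (MP n) => _ _; rewrite div1r.
move=> w nMw; have [K MK] := not_lim_sup_set nMw.
apply/cvgrPdist_lt => e e_gt0.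
have [k0 _ k0_lt] := inv_pow2_lt e_gt0.
exists (maxn K k0) => // k /=; rewrite geq_max => /andP[Kk k0k].
rewrite distrC; apply: le_lt_trans (k0_lt k.+1 _); last exact: leqW.
have [_ close_k _] := MP k; rewrite leNgt; apply/negP => far.
exact: MK k Kk (close_k w far).
Qed.

End fast_convergence_in_probability.

Definition cvg_along {R : numFieldType} (A : set nat) (u : nat -> R) (v : R) :=
  forall e, 0 < e -> exists N, forall n, (N <= n)%N -> A n -> `|u n - v| < e.

Section convergence_along.
Context {R : numFieldType}.
Implicit Types (A B : set nat) (u : nat -> R) (v : R).

Lemma cvg_along_almost_subset A B u v :
  almost_subset B A -> cvg_along A u v -> cvg_along B u v.
Proof.
move=> [N0 BA] u_cvg e /u_cvg[N uN]; exists (maxn N N0) => n.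
by rewrite geq_max => /andP[Nn N0n] /(BA _ N0n); exact: uN.
Qed.

Lemma cvg_along_unique A u v v' :
  unbounded A -> cvg_along A u v -> cvg_along A u v' -> v = v'.
Proof.
move=> A_unbounded u_v u_v'; apply/eqP; rewrite -subr_eq0 -normr_le0.
apply/ler_addgt0Pr => e e_gt0; rewrite add0r.
have [N uN] := u_v (e / 2) (divr_gt0 e_gt0 (ltr0n _ 2)).
have [N' uN'] := u_v' (e / 2) (divr_gt0 e_gt0 (ltr0n _ 2)).
have [n [+ An]] := A_unbounded (maxn N N'); rewrite geq_max => /andP[Nn N'n].
have -> : v - v' = (u n - v') - (u n - v) by ring.
apply: le_trans (ler_normB _ _) _; rewrite [e]splitr.
by apply: ltW; apply: ltrD; [exact: uN'|exact: uN].
Qed.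

Lemma cvg_along_range (a : nat -> nat) u v :
  {mono a : m n / (m <= n)%N} -> u (a k) @[k --> \oo] --> v -> cvg_along (range a) u v.
Proof.
move=> a_mono /cvgrPdist_lt ua_cvg e /ua_cvg[K _ uaK]; exists (a K) => n + [k _ kn].
by rewrite -kn a_mono => Kk; rewrite distrC; exact: uaK.
Qed.

End convergence_along.

Section tower_limit.
Context {R : numFieldType} {I : Type}.
Variables (lt : I -> I -> Prop) (A : I -> set nat).
Hypothesis lt_total : forall x y, lt x y \/ x = y \/ lt y x.
Hypothesis A_unbounded : forall x, unbounded (A x).

Definition tower_cvg (u : nat -> R) (v : R) :=
  exists x, forall y, x = y \/ lt x y -> cvg_along (A y) u v.

Lemma tower_cvg_unique u v v' : tower_cvg u v -> tower_cvg u v' -> v = v'.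
Proof.
move=> [x u_v] [x' u_v']; have [xx'|[eq_xx'|x'x]] := lt_total x x'.
- exact: cvg_along_unique (A_unbounded x') (u_v _ (or_intror xx')) (u_v' _ (or_introl _)).
- rewrite -eq_xx' in u_v'.
  exact: cvg_along_unique (A_unbounded x) (u_v _ (or_introl _)) (u_v' _ (or_introl _)).
- exact: cvg_along_unique (A_unbounded x) (u_v _ (or_introl _)) (u_v' _ (or_intror x'x)).
Qed.

Definition tower_lim (u : nat -> R) : R :=
  if pselect (exists v, tower_cvg u v) is left ex then projT1 (cid ex) else 0.

Lemma tower_limE u v : tower_cvg u v -> tower_lim u = v.
Proof.
rewrite /tower_lim => u_v; case: pselect => [ex|[]]; last by exists v.
by case: cid => v' /= u_v'; exact: tower_cvg_unique u_v' u_v.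
Qed.

End tower_limit.

Section construction.
Context {d : measure_display} {T : measurableType d} {R : realType}.
Variables (F : R -> set (set T)) (Pfam : set (probability T R)).
Variables (Yn : nat -> R -> T -> R) (YP : probability T R -> R -> T -> R).
Hypotheses (hF : is_filtration F) (hFrc : right_continuous_filtration F).
Hypothesis hYad : forall n, adapted (Fstar Pfam F) (Yn n).
Hypothesis hYP : forall P, Pfam P -> cadlag (YP P) /\
  forall t, 0 <= t <= 1 -> cvg_in_prob P (fun n => Yn n t) (YP P t).
Variables (lt : (nat -> nat -> bool) -> (nat -> nat -> bool) -> Prop)
          (A : (nat -> nat -> bool) -> set nat).
Hypothesis lt_total : forall g h, lt g h \/ g = h \/ lt h g.
Hypothesis A_tower : forall g, [/\ unbounded (A g), diagonalizes g (A g) &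
                                   forall h, lt h g -> almost_subset (A g) (A h)].

Let A_unbounded g : unbounded (A g). Proof. by case: (A_tower g). Qed.

Definition Ylim t w : R := tower_lim lt A (fun n => Yn n t w).

(* The requirement g n k says that Y^n_t is 2^-(k+1)-close to Y^P_t in
   P-probability; the tower set A g then picks a Borel-Cantelli subsequence. *)
Lemma Ylim_ae P t : Pfam P -> 0 <= t <= 1 -> exists a : nat -> nat,
  exists2 N, P.-negligible N & forall w, ~ N w ->
    Ylim t w = YP P t w /\ Yn (a k) t w @[k --> \oo] --> YP P t w.
Proof.
move=> PP t_itv.
pose g n k := `[< close_in_prob P (Yn n t) (YP P t) ((2 ^ k.+1)%:R)^-1 >].
have g_cols : eventually_in_columns g.
  move=> k; have e_gt0 : 0 < ((2 ^ k.+1)%:R)^-1 :> R by rewrite invr_gt0 ltr0n expn_gt0.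
  have [N _ YnN] := (hYP PP).2 t t_itv _ e_gt0 _ e_gt0.
  by exists N => n Nn; apply/asboolP; exact: YnN.
have [_ A_diag _] := A_tower g.
have [a [a_mono A_range ga]] := A_diag g_cols.
have [N N_null a_cvg] := @close_in_prob_ae_cvg _ _ _ P (fun k => Yn (a k) t) (YP P t)
  (fun k => asboolW (ga k)).
exists a, N => // w Nw; split; last exact: a_cvg.
apply: tower_limE => //; exists g => h g_h.
have A_cvg : cvg_along (A g) (fun n => Yn n t w) (YP P t w).
  by rewrite A_range; exact: cvg_along_range a_mono (a_cvg w Nw).
case: g_h => [<-//|gh]; have [_ _ Ah_decr] := A_tower h.
exact: cvg_along_almost_subset (Ah_decr g gh) A_cvg.
Qed.

Lemma Ylim_measurable P t B : Pfam P -> 0 <= t <= 1 -> measurable B ->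
  completion P (F t) (Ylim t @^-1` B).
Proof.
move=> PP t_itv; have [a [N N_null Na]] := Ylim_ae PP t_itv.
apply: (completion_cvg (h := fun k => Yn (a k) t) N_null).
  by move=> k Y mY; exact: hYad (a k) t t_itv Y mY P PP.
by move=> w Nw; have [-> ] := Na w Nw.
Qed.

Definition interpolates w (c : R -> R) :=
  cadlag_path c /\ forall i, c (dyadic i) = Ylim (dyadic i) w.

Definition Ypath w : R -> R :=
  if pselect (exists c, interpolates w c) is left ex then projT1 (cid ex) else fun=> 0.

Definition Y t w := Ypath w t.

Lemma Ypath_cadlag w : cadlag_path (Ypath w).
Proof.
rewrite /Ypath; case: pselect => [ex|_]; first by case: cid => c [].
by split=> t _; [exact: cvg_cst|exact: is_cvg_cst].
Qed.

Lemma Ypath_interpolates w : (exists c, interpolates w c) -> interpolates w (Ypath w).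
Proof. by rewrite /Ypath; case: pselect => // ex _; case: cid. Qed.

Lemma Ypath_ae P : Pfam P -> exists2 N, P.-negligible N & forall w, ~ N w ->
  interpolates w (Ypath w) /\ forall t, 0 <= t <= 1 -> Y t w = YP P t w.
Proof.
move=> PP; have /choice[N NP] : forall i, exists N, P.-negligible N /\
    forall w, ~ N w -> Ylim (dyadic i) w = YP P (dyadic i) w.
  move=> i; have [a [N N_null NP]] := Ylim_ae PP (dyadic_itv i).
  by exists N; split=> // w Nw; case: (NP w Nw).
exists (\bigcup_n \bigcup_k N (n, k)).
  by apply: negligible_bigcup => n; apply: negligible_bigcup => k; case: (NP (n, k)).
move=> w Nw; have YP_interp : interpolates w (YP P ^~ w).
  split=> [|[n k]]; first exact: (hYP PP).1 w.
  by rewrite (NP (n, k)).2 // => Nnkw; apply: Nw; exists n => //; exists k.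
have [[Yw_rc _] Yw_dyadic] := Ypath_interpolates (ex_intro _ _ YP_interp).
split=> [|t]; first exact: Ypath_interpolates (ex_intro _ _ YP_interp).
apply: right_continuous_eq_dyadic Yw_rc YP_interp.1.1 _ t => i.
by rewrite Yw_dyadic YP_interp.2.
Qed.

Lemma Y_measurable P t B : Pfam P -> 0 <= t <= 1 -> measurable B ->
  completion P (F t) (Y t @^-1` B).
Proof.
move=> PP t_itv mB; have [N N_null NP] := Ypath_ae PP.
have /andP[t_ge0] := t_itv; rewrite le_eqVlt => /orP[/eqP t1|t_lt1].
  subst t; apply: (completion_cvg (h := fun=> Ylim (dyadic (0, 1)%N)) N_null) => //.
    move=> m Y mY.
    by rewrite -[in F 1]dyadic1; exact: Ylim_measurable PP (dyadic_itv _) mY.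
  move=> w Nw; by rewrite /Y -[in Ypath w 1]dyadic1 (NP w Nw).1.2; exact: cvg_cst.
have t_itv' : 0 <= t < 1 by rewrite t_ge0 t_lt1.
apply: (completion_right_continuous hF hFrc t_itv') => s /andP[ts s_le1].
have [ij [ij_gt ij_near ij_cvg]] := dyadic_right_seq t_itv'.
have [J _ ij_le_s] := ij_near s ts.
apply: (completion_cvg (h := fun m => Ylim (dyadic (ij (m + J)%N))) N_null) => //.
  move=> m Y mY; have ij_le_s' := ij_le_s _ (leq_addl m J).
  apply: (completion_filtrationS hF (dyadic_ge0 _) ij_le_s' s_le1).
  exact: Ylim_measurable PP (dyadic_itv _) mY.
move=> w Nw; have [[[Yw_rc _] Yw_dyadic] _] := NP w Nw.
have := (cvg_at_rightP _ t _).1 (Yw_rc t t_itv') _ (conj ij_gt ij_cvg).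
by rewrite -(cvg_shiftn J) (funext (fun m => Yw_dyadic (ij (m + J)%N))).
Qed.

End construction.

Theorem lemma2p5 (d : measure_display) (T : measurableType d) (R : realType)
  (hCH : CH R)
  (F : R -> set (set T)) (hF : is_filtration F)
  (hFrc : right_continuous_filtration F)
  (Pfam : set (probability T R))
  (Yn : nat -> R -> T -> R)
  (hYad : forall n, adapted (Fstar Pfam F) (Yn n))
  (hYcl : forall n, cadlag (Yn n))
  (YP : probability T R -> R -> T -> R)
  (hYP : forall P, Pfam P -> cadlag (YP P) /\
      forall t, 0 <= t <= 1 -> cvg_in_prob P (fun n => Yn n t) (YP P t)) :
  exists Y : R -> T -> R,
    adapted (Fstar Pfam F) Y /\ cadlag Y /\
    forall P, Pfam P ->
      {ae P, forall w, forall t, 0 <= t <= 1 -> Y t w = YP P t w}.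
Proof.
have [lt [A [lt_total A_tower]]] := CH_diagonalizing_tower hCH.
exists (Y Yn lt A); split; [|split].
- move=> t t_itv B mB P PP.
  exact (Y_measurable hF hFrc hYad hYP lt_total A_tower PP t_itv mB).
- move=> w; exact: Ypath_cadlag.
- move=> P PP; have [N N_null NP] := Ypath_ae hYP lt_total A_tower PP.
  apply: negligibleS N_null => w /= Yw; apply: contrapT => Nw; apply: Yw.
  exact: (NP w Nw).2.
Qed.
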